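(* Let $P_1(z)=1+12z+9z^2$, $P_2(z)=1+4z+3z^2$, $P_3(z)=1+8z+8z^2$, $P_4(z)=1+15z+45z^2+27z^3$ and $P_5(z)=1+13z+21z^2+9z^3$. For each $i$, let $N_i$ be the number of pairwise non-isomorphic connected finite simple graphs whose independence polynomial is $P_i$. Then $N_i>0$ for each $i$; in particular $N_1\ge10$, $N_2=1$, $N_3\ge25$, $N_4\ge4$ and $N_5\ge5$.
   Context: For a finite simple graph $G$, the independence polynomial is $I_G(z)=\sum_{i\ge0} a_i z^i$, where $a_i$ is the number of sets of $i$ pairwise non-adjacent vertices of $G$ (with $a_0=1$). *)

From HB Require Import structures.
From mathcomp Require Import all_boot all_order all_algebra.
Set Implicit Arguments. Unset Strict Implicit. Unset Printing Implicit Defensive.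
Import GRing.Theory.
Local Open Scope ring_scope.

Record fgraph := FGraph {
  vert : finType;
  adj : rel vert;
  adj_sym : symmetric adj;
  adj_irr : irreflexive adj
}.

Definition independent (G : fgraph) (S : {set vert G}) : bool :=
  [forall x in S, forall y in S, ~~ adj x y].

Definition indep_count (G : fgraph) (i : nat) : nat :=
  #|[set S : {set vert G} | independent S & #|S| == i]|.

Definition indep_poly (G : fgraph) : {poly int} :=
  \poly_(i < #|vert G|.+1) (indep_count G i)%:Z.

Definition connected_graph (G : fgraph) : Prop :=
  (0 < #|vert G|)%N /\ forall x y : vert G, connect (@adj G) x y.

Definition isomorphic (G H : fgraph) : Prop :=
  exists f : vert G -> vert H,
    bijective f /\ forall x y, adj (f x) (f y) = adj x y.

Definition at_least_classes (k : nat) (P : {poly int}) : Prop :=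
  exists F : 'I_k -> fgraph,
    (forall i, connected_graph (F i) /\ indep_poly (F i) = P) /\
    (forall i j, i != j -> ~ isomorphic (F i) (F j)).

Definition exactly_one_class (P : {poly int}) : Prop :=
  (exists G, connected_graph G /\ indep_poly G = P) /\
  (forall G H, connected_graph G -> indep_poly G = P ->
               connected_graph H -> indep_poly H = P -> isomorphic G H).

Definition P1 : {poly int} := 1 + 12%:R *: 'X + 9%:R *: 'X^2.
Definition P2 : {poly int} := 1 + 4%:R *: 'X + 3%:R *: 'X^2.
Definition P3 : {poly int} := 1 + 8%:R *: 'X + 8%:R *: 'X^2.
Definition P4 : {poly int} := 1 + 15%:R *: 'X + 45%:R *: 'X^2 + 27%:R *: 'X^3.
Definition P5 : {poly int} := 1 + 13%:R *: 'X + 21%:R *: 'X^2 + 9%:R *: 'X^3.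

From mathcomp Require Import all_boot all_order all_algebra.

Set Implicit Arguments. Unset Strict Implicit. Unset Printing Implicit Defensive.

(* The lower bounds are witnessed by explicit graphs on 12, 8, 15 and 13 vertices.
   Each is checked to be connected and to have the prescribed independence
   polynomial, and graphs of the same family are told apart by an isomorphism
   invariant: the multiset, over all vertices, of the sorted degrees of their
   neighbours.  For P2, a connected graph has 4 vertices, 3 independent pairs and
   no independent triple; running through the 64 labelled graphs on 4 vertices
   shows that it is the path. *)

(* Computations are carried out on explicit sequences of naturals: vm_compute
   cannot enumerate 'I_n or sets over it, as ordinal enumeration goes through
   insub and hence through the opaque idP. *)
Fixpoint count_indep (A : Type) (r : rel A) (a : pred A) (s : seq A) (k : nat)
    {struct s} : nat :=
  if k is k'.+1 then
    if s is v :: s' then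
      count_indep r a s' k +
      (if a v then count_indep r (fun u => a u && ~~ r v u) s' k' else 0)
    else 0
  else 1.

Lemma count_indep_map (A B : Type) (f : A -> B) (r : rel A) (r' : rel B) a a' s k :
  (forall x y, r' (f x) (f y) = r x y) -> (forall x, a' (f x) = a x) ->
  count_indep r' a' (map f s) k = count_indep r a s k.
Proof.
move=> rf; elim: s a a' k => [|v s IHs] a a' [|k] af //=.
rewrite af (IHs a a') //; case: (a v) => //; congr (_ + _).
by apply: IHs => x; rewrite af rf.
Qed.

Lemma count_indep0 (A : Type) (r : rel A) a s : count_indep r a s 0 = 1.
Proof. by case: s. Qed.

Lemma count_indep1 (A : Type) (r : rel A) a s : count_indep r a s 1 = count a s.
Proof. by elim: s => //= v s ->; rewrite count_indep0 addnC; case: (a v). Qed.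

Lemma Poly_cat_nseq0 (R : nzSemiRingType) (c : seq R) m : Poly (c ++ nseq m 0%R) = Poly c.
Proof.
apply/polyP => i; rewrite !coef_Poly nth_cat nth_nseq if_same.
by case: ltnP => // le_c_i; rewrite nth_default.
Qed.

Section IndependentSets.

Variable G : fgraph.
Local Notation T := (vert G).
Implicit Types (v : T) (s : seq T) (a : pred T).

Lemma independentP (S : {set T}) :
  reflect {in S &, forall x y, ~~ adj x y} (independent S).
Proof.
apply: (iffP forall_inP) => [indS x y xS yS | indS x xS].
  exact: forall_inP (indS x xS) y yS.
by apply/forall_inP => y; apply: indS.
Qed.

Definition indep_within (s : seq T) (a : pred T) (k : nat) : {set {set T}} :=
  [set S : {set T} | [&& S \subset [pred x in s | a x], independent S & #|S| == k]].

Lemma card_indep_within0 s a : #|indep_within s a 0| = 1.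
Proof.
suff -> : indep_within s a 0 = [set set0] by rewrite cards1.
apply/setP => S; rewrite !inE cards_eq0; case: eqP => [-> | _]; rewrite ?andbF //.
apply/and3P; split=> //; first by apply/subsetP => x; rewrite inE.
by apply/independentP => x; rewrite inE.
Qed.

Lemma indep_within_nil a k : indep_within [::] a k.+1 = set0.
Proof.
apply/setP => S; rewrite !inE; apply/and3P => -[/subsetP subS _ /eqP cardS].
have /set0Pn [x xS] : S != set0 by rewrite -card_gt0 cardS.
by have := subS x xS; rewrite inE.
Qed.

Lemma indep_within_notin v s a k : v \notin s ->
  indep_within (v :: s) a k :\: [set S : {set T} | v \in S] = indep_within s a k.
Proof.
move=> vNs; apply/setP => S; rewrite !inE.
case vS: (v \in S) => /=.
  by apply/esym/negbTE/and3P => -[/subsetP/(_ v vS)]; rewrite inE (negbTE vNs).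
congr (_ && _); apply/subsetP/subsetP => subS x xS; have := subS x xS; rewrite !inE.
  by case: eqP => [xv | _] //; rewrite xv vS in xS.
by case/andP => -> ->; rewrite orbT.
Qed.

Lemma indep_within_in v s a k : v \notin s -> a v ->
  indep_within (v :: s) a k.+1 :&: [set S : {set T} | v \in S] =
  [set v |: S | S in indep_within s (fun u => a u && ~~ adj v u) k].
Proof.
move=> vNs av; apply/setP => S; rewrite !inE; apply/idP/imsetP.
  case/andP=> /and3P [/subsetP subS /independentP indS /eqP cardS] vS.
  exists (S :\ v); last by rewrite setD1K.
  rewrite !inE; apply/and3P; split.
  - apply/subsetP => x; rewrite !inE => /andP [xv xS].
    have := subS x xS; rewrite !inE (negbTE xv) /= => /andP [-> ->].
    exact: indS.
  - by apply/independentP => x y /setD1P [_ xS] /setD1P [_ yS]; apply: indS.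
  - by move: cardS; rewrite (cardsD1 v S) vS add1n => -[->].
case=> S' /[!inE] /and3P [/subsetP subS' /independentP indS' /eqP cardS'] ->.
have vNS' : v \notin S' by apply/negP => /subS'; rewrite inE (negbTE vNs).
rewrite setU11 andbT cardsU1 vNS' cardS' eqxx andbT; apply/andP; split.
  apply/subsetP => x /setU1P [-> | /subS']; first by rewrite inE mem_head av.
  by rewrite !inE => /and3P [-> -> _]; rewrite orbT.
apply/independentP => x y /setU1P [-> | xS] /setU1P [-> | yS].
- by rewrite adj_irr.
- by have := subS' y yS; rewrite inE => /and3P [].
- by rewrite adj_sym; have := subS' x xS; rewrite inE => /and3P [].
- exact: indS'.
Qed.

Lemma card_indep_within s a k :
  uniq s -> #|indep_within s a k| = count_indep (@adj G) a s k.
Proof.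
elim: s a k => [|v s IHs] a [|k] uniq_vs;
  rewrite ?card_indep_within0 ?count_indep0 //=.
  by rewrite indep_within_nil cards0.
case/andP: uniq_vs => vNs uniq_s.
rewrite -(cardsID [set S : {set T} | v \in S]) addnC indep_within_notin // IHs //.
congr (_ + _); case av: (a v).
  rewrite indep_within_in // card_in_imset ?IHs // => S1 S2.
  rewrite !inE => /and3P [/subsetP sub1 _ _] /and3P [/subsetP sub2 _ _] eqS.
  have vNS1 : v \notin S1 by apply/negP => /sub1; rewrite inE (negbTE vNs).
  have vNS2 : v \notin S2 by apply/negP => /sub2; rewrite inE (negbTE vNs).
  by rewrite -(setU1K vNS1) eqS setU1K.
apply: eq_card0 => S; rewrite !inE; apply/negP => /andP [/and3P [/subsetP subS _ _] vS].
by have := subS v vS; rewrite inE av andbF.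
Qed.

Lemma indep_count_enum k : indep_count G k = count_indep (@adj G) predT (enum T) k.
Proof.
rewrite -card_indep_within ?enum_uniq //; apply: eq_card => S; rewrite !inE.
suff -> : S \subset [pred x in enum T | predT x] by [].
by apply/subsetP => x _; rewrite inE mem_enum.
Qed.

Lemma indep_count1 : indep_count G 1 = #|T|.
Proof. by rewrite indep_count_enum count_indep1 count_predT cardE. Qed.

Lemma indep_polyE :
  indep_poly G = Poly [seq Posz (indep_count G i) | i <- iota 0 #|T|.+1].
Proof.
apply/polyP => i; rewrite coef_poly coef_Poly; case: ltnP => [lt_i | le_i].
  by rewrite (nth_map 0) ?size_iota // nth_iota.
by rewrite nth_default // size_map size_iota.
Qed.

End IndependentSets.

Definition profile (A : Type) (r : rel A) (s : seq A) (x : A) : seq nat :=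
  sort leq [seq count (r y) s | y <- s & r x y].

Definition profiles (A : Type) (r : rel A) (s : seq A) : seq (seq nat) :=
  map (profile r s) s.

Lemma profiles_map (A B : Type) (r : rel A) (r' : rel B) (f : A -> B) s :
  (forall x y, r' (f x) (f y) = r x y) -> profiles r' (map f s) = profiles r s.
Proof.
move=> rf; rewrite /profiles -map_comp; apply: eq_map => x /=.
rewrite /profile filter_map -map_comp (eq_filter (rf x)); congr sort; apply: eq_map => y /=.
by rewrite count_map; apply: eq_count => z /=; rewrite rf.
Qed.

Lemma perm_profiles (A : eqType) (r : rel A) (s1 s2 : seq A) :
  perm_eq s1 s2 -> perm_eq (profiles r s1) (profiles r s2).
Proof.
move=> perm12; have /permP count12 := perm12.
rewrite /profiles (eq_map (_ : profile r s1 =1 profile r s2)) ?perm_map // => x.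
apply/(perm_sortP leq_total leq_trans anti_leq).
by rewrite (eq_map (fun y => count12 (r y))); apply/perm_map/perm_filter.
Qed.

Lemma perm_enum_bij (T T' : finType) (f : T -> T') :
  bijective f -> perm_eq (map f (enum T)) (enum T').
Proof.
case=> g fK gK; apply: uniq_perm.
- by rewrite map_inj_uniq ?enum_uniq //; apply: can_inj fK.
- exact: enum_uniq.
- by move=> y; rewrite mem_enum -(gK y) map_f ?mem_enum.
Qed.

Section Isomorphism.

Implicit Types G H K : fgraph.

Lemma isomorphic_sym G H : isomorphic G H -> isomorphic H G.
Proof.
case=> f [[g fK gK] f_adj]; exists g; split; first by exists f.
by move=> x y; rewrite -f_adj !gK.
Qed.

Lemma isomorphic_trans G H K : isomorphic G H -> isomorphic H K -> isomorphic G K.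
Proof.
case=> f [f_bij f_adj] [g [g_bij g_adj]]; exists (g \o f); split.
  exact: bij_comp.
by move=> x y /=; rewrite g_adj f_adj.
Qed.

Lemma indep_count_iso_leq G H k : isomorphic G H -> indep_count G k <= indep_count H k.
Proof.
case=> f [/bij_inj f_inj f_adj]; rewrite /indep_count -(card_imset _ (imset_inj f_inj)).
apply/subset_leq_card/subsetP => fS /imsetP [S]; rewrite !inE => /andP [indS cardS] ->.
rewrite card_imset // cardS andbT; apply/independentP => _ _ /imsetP [x xS ->] /imsetP [y yS ->].
by rewrite f_adj; apply: (independentP _ indS).
Qed.

Lemma indep_count_iso G H k : isomorphic G H -> indep_count G k = indep_count H k.
Proof.
move=> isoGH; apply/anti_leq.
by rewrite !indep_count_iso_leq //; apply: isomorphic_sym.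
Qed.

Lemma connected_iso G H : isomorphic G H -> connected_graph G -> connected_graph H.
Proof.
case=> f [f_bij f_adj] [G_gt0 connG]; split; first by rewrite -(bij_eq_card f_bij).
have f_connect x y : connect (@adj G) x y -> connect (@adj H) (f x) (f y).
  case/connectP => p walk ->; elim: p x walk => //= z p IHp x /andP [xz walk].
  by apply: connect_trans (IHp z walk); apply: connect1; rewrite f_adj.
case: f_bij => g _ gK x y; rewrite -(gK x) -(gK y); exact: f_connect.
Qed.

Lemma profiles_iso G H : isomorphic G H ->
  perm_eq (profiles (@adj G) (enum (vert G))) (profiles (@adj H) (enum (vert H))).
Proof.
case=> f [f_bij f_adj]; rewrite -(profiles_map _ f_adj).
exact/perm_profiles/perm_enum_bij.
Qed.

Lemma connected_neighbour G (x : vert G) :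
  connected_graph G -> 1 < #|vert G| -> exists y, adj x y.
Proof.
case=> _ connG cardG.
have /card_gt0P [y] : 0 < #|predC1 x| by rewrite cardC1 -ltnS (ltn_predK cardG).
rewrite !inE => yNx; have /connectP [[|z p] /= walk y_last] := connG x y.
  by rewrite y_last eqxx in yNx.
by exists z; case/andP: walk.
Qed.

End Isomorphism.

Section EdgeGraphs.

Implicit Types (n : nat) (es : seq (nat * nat)).

Definition edge_adj es : rel nat :=
  fun x y => (x != y) && (((x, y) \in es) || ((y, x) \in es)).

Lemma edge_adj_sym es : symmetric (edge_adj es).
Proof. by move=> x y; rewrite /edge_adj eq_sym orbC. Qed.

Lemma edge_adj_irr es : irreflexive (edge_adj es).
Proof. by move=> x; rewrite /edge_adj eqxx. Qed.

Definition edge_graph n es : fgraph :=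
  @FGraph 'I_n (fun x y => edge_adj es x y)
    (fun x y => edge_adj_sym es x y) (fun x => edge_adj_irr es x).

Definition edge_indep_count n es k := count_indep (edge_adj es) predT (iota 0 n) k.

Definition edge_indep_coefs n es : seq int :=
  [seq Posz (edge_indep_count n es i) | i <- iota 0 n.+1].

Definition edge_profiles n es := profiles (edge_adj es) (iota 0 n).

Definition has_lower_neighbours n es : bool :=
  all (fun x => has (edge_adj es x) (iota 0 x)) (iota 1 n.-1).

Definition no_isolated n es : bool :=
  all (fun x => has (edge_adj es x) (iota 0 n)) (iota 0 n).

Lemma edge_graph_indep_count n es k :
  indep_count (edge_graph n es) k = edge_indep_count n es k.
Proof.
by rewrite indep_count_enum /edge_indep_count -val_enum_ord; apply/esym/count_indep_map.
Qed.

Lemma edge_graph_profiles n es :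
  profiles (@adj (edge_graph n es)) (enum 'I_n) = edge_profiles n es.
Proof. by rewrite /edge_profiles -val_enum_ord; apply/esym/profiles_map. Qed.

Lemma edge_graph_indep_poly n es (c : seq int) :
  edge_indep_coefs n es = c ++ nseq (n.+1 - size c) 0%R ->
  indep_poly (edge_graph n es) = Poly c.
Proof.
move=> coefs; rewrite indep_polyE card_ord -(Poly_cat_nseq0 c (n.+1 - size c)) -coefs.
by congr Poly; apply: eq_map => i; rewrite edge_graph_indep_count.
Qed.

Lemma edge_graph_connected n es : 0 < n -> has_lower_neighbours n es ->
  connected_graph (edge_graph n es).
Proof.
move=> n_gt0 /allP lower; split; first by rewrite card_ord.
pose x0 : 'I_n := Ordinal n_gt0.
suff connect0 (x : 'I_n) : connect (@adj (edge_graph n es)) x0 x.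
  move=> x y; apply: connect_trans (connect0 y).
  by rewrite (sym_connect_sym (@adj_sym _)) connect0.
have [m] := ubnP (val x); elim: m x => // m IHm x lt_xm.
have [x0_eq | x_gt0] := posnP x; first by rewrite (_ : x = x0) //; apply: val_inj.
have /hasP [y] : has (edge_adj es x) (iota 0 x).
  by apply: lower; rewrite mem_iota x_gt0 add1n prednK ?ltn_ord.
rewrite mem_iota => /andP [_ lt_yx] xy.
have y_lt_n : y < n by apply: ltn_trans lt_yx (ltn_ord x).
apply: connect_trans (IHm (Ordinal y_lt_n) _) (connect1 _).
  exact: leq_trans lt_yx _.
by rewrite /= edge_adj_sym.
Qed.

Lemma edge_graph_no_isolated n es : 1 < n -> connected_graph (edge_graph n es) ->
  no_isolated n es.
Proof.
move=> n_gt1 connG; apply/allP => x; rewrite mem_iota add0n => /andP [_ x_lt_n].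
have := @connected_neighbour (edge_graph n es) (Ordinal x_lt_n) connG.
rewrite card_ord => /(_ n_gt1) [y xy].
by apply/hasP; exists (val y); rewrite // mem_iota ltn_ord.
Qed.

Definition relabels_edges n es1 es2 (p : seq nat) : bool :=
  all (fun x => all (fun y =>
    edge_adj es2 (nth 0 p x) (nth 0 p y) == edge_adj es1 x y) (iota 0 n)) (iota 0 n).

Lemma edge_graph_iso n es1 es2 p : perm_eq p (iota 0 n) -> relabels_edges n es1 es2 p ->
  isomorphic (edge_graph n es1) (edge_graph n es2).
Proof.
move=> perm_p /allP relabel.
have size_p : size p = n by rewrite (perm_size perm_p) size_iota.
have p_lt (x : 'I_n) : nth 0 p x < n.
  have: nth 0 p x \in iota 0 n by rewrite -(perm_mem perm_p) mem_nth ?size_p.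
  by rewrite mem_iota.
exists (fun x => Ordinal (p_lt x)); split.
  apply: inj_card_bij => [x y /(congr1 val) /= /eqP|//].
  by rewrite nth_uniq ?size_p ?(perm_uniq perm_p) ?iota_uniq // => /eqP /val_inj.
move=> x y /=; apply/eqP/(allP (relabel x _)); by rewrite mem_iota ltn_ord.
Qed.

End EdgeGraphs.

Definition lt_pairs n : seq (nat * nat) :=
  [seq (i, j) | i <- iota 0 n, j <- iota i.+1 (n - i.+1)].

Lemma mem_lt_pairs n i j : ((i, j) \in lt_pairs n) = (i < j < n).
Proof.
apply/allpairsPdep/andP => [[i' [j' [i'_in j'_in [-> ->]]]] | [ij jn]].
  move: i'_in j'_in; rewrite !mem_iota /= => i'_n /andP [-> /=].
  by rewrite subnKC.
exists i, j; rewrite !mem_iota /= (ltn_trans ij jn) ij subnKC //; exact: ltn_trans ij jn.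
Qed.

Definition rel_edges (r : rel nat) n : seq (nat * nat) := [seq p <- lt_pairs n | r p.1 p.2].

Lemma edge_adj_rel_edges (r : rel nat) n i j : symmetric r -> irreflexive r ->
  i < n -> j < n -> edge_adj (rel_edges r n) i j = r i j.
Proof.
move=> r_sym r_irr i_n j_n; rewrite /edge_adj !mem_filter !mem_lt_pairs /= i_n j_n !andbT.
by case: ltngtP => [ij | ji | ->]; rewrite ?r_irr //= !andbT !andbF ?orbF // r_sym.
Qed.

Definition enum_adj (G : fgraph) (x0 : vert G) : rel nat :=
  fun i j => adj (nth x0 (enum (vert G)) i) (nth x0 (enum (vert G)) j).

Lemma edge_graph_enum_adj_iso (G : fgraph) (x0 : vert G) n : #|vert G| = n ->
  isomorphic (edge_graph n (rel_edges (enum_adj x0) n)) G.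
Proof.
move=> cardG; have size_enum : size (enum (vert G)) = n by rewrite -cardE.
exists (fun i : 'I_n => nth x0 (enum (vert G)) i); split.
  apply: inj_card_bij => [i j /eqP|]; last by rewrite card_ord cardG.
  by rewrite nth_uniq ?size_enum ?enum_uniq // => /eqP /val_inj.
move=> i j /=; rewrite edge_adj_rel_edges ?ltn_ord //.
  by move=> x y; apply: adj_sym.
by move=> x; apply: adj_irr.
Qed.

Lemma at_least_classes_leq k m P : k <= m -> at_least_classes m P -> at_least_classes k P.
Proof.
move=> le_km [F [FP F_noniso]]; exists (fun i => F (widen_ord le_km i)); split=> // i j neq_ij.
by apply: F_noniso; apply: contra neq_ij => /eqP /(congr1 val) /= /eqP.
Qed.

Lemma at_least_classes_edge_graphs n (graphs : seq (seq (nat * nat))) (c : seq int) :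
  0 < n ->
  all (has_lower_neighbours n) graphs ->
  all (fun es => edge_indep_coefs n es == c ++ nseq (n.+1 - size c) 0%R) graphs ->
  pairwise (fun p1 p2 => ~~ perm_eq p1 p2) (map (edge_profiles n) graphs) ->
  at_least_classes (size graphs) (Poly c).
Proof.
move=> n_gt0 /allP connected /allP coefs /(pairwiseP [::]) distinct.
exists (fun i : 'I_(size graphs) => edge_graph n (nth [::] graphs i)); split.
  move=> i; have graph_i := mem_nth [::] (ltn_ord i); split.
    exact: edge_graph_connected (connected _ graph_i).
  exact/edge_graph_indep_poly/eqP/coefs.
have noniso (i j : 'I_(size graphs)) : i < j ->
    ~~ perm_eq (edge_profiles n (nth [::] graphs i)) (edge_profiles n (nth [::] graphs j)).
  by move=> lt_ij; have := distinct i j; rewrite !inE size_map !ltn_ord !(nth_map [::]) //; apply.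
move=> i j neq_ij /profiles_iso; rewrite !edge_graph_profiles; apply/negP.
have [lt_ij | lt_ji | eq_ij] := ltngtP i j; last by rewrite (val_inj eq_ij) eqxx in neq_ij.
  exact: noniso.
by rewrite perm_sym; apply: noniso.
Qed.

Definition path4_edges : seq (nat * nat) := [:: (0, 1); (1, 2); (2, 3)].

(* [mask m (lt_pairs 4)] ranges over the edge sets of the 64 labelled graphs on
   4 vertices. *)
Lemma path4_relabelling (m : seq bool) es : size m = 6 -> es = mask m (lt_pairs 4) ->
  [&& edge_indep_count 4 es 2 == 3, edge_indep_count 4 es 3 == 0 & no_isolated 4 es] ==>
  has (relabels_edges 4 es path4_edges) (permutations (iota 0 4)).
Proof.
case: m => [|b1 [|b2 [|b3 [|b4 [|b5 [|b6 [|? ?]]]]]]] // _ ->.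
by case: b1; case: b2; case: b3; case: b4; case: b5; case: b6; vm_compute.
Qed.

Lemma P1E : P1 = Poly [:: 1; 12; 9]%R.
Proof.
by apply/polyP => -[|[|[|[|i]]]];
  rewrite coef_Poly !coefD !coefZ coef1 coefX !coefXn /= ?nth_nil.
Qed.

Lemma P2E : P2 = Poly [:: 1; 4; 3]%R.
Proof.
by apply/polyP => -[|[|[|[|i]]]];
  rewrite coef_Poly !coefD !coefZ coef1 coefX !coefXn /= ?nth_nil.
Qed.

Lemma P3E : P3 = Poly [:: 1; 8; 8]%R.
Proof.
by apply/polyP => -[|[|[|[|i]]]];
  rewrite coef_Poly !coefD !coefZ coef1 coefX !coefXn /= ?nth_nil.
Qed.

Lemma P4E : P4 = Poly [:: 1; 15; 45; 27]%R.
Proof.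
by apply/polyP => -[|[|[|[|i]]]];
  rewrite coef_Poly !coefD !coefZ coef1 coefX !coefXn /= ?nth_nil.
Qed.

Lemma P5E : P5 = Poly [:: 1; 13; 21; 9]%R.
Proof.
by apply/polyP => -[|[|[|[|i]]]];
  rewrite coef_Poly !coefD !coefZ coef1 coefX !coefXn /= ?nth_nil.
Qed.

Lemma connected_P2_iso_path4 (G : fgraph) :
  connected_graph G -> indep_poly G = P2 -> isomorphic G (edge_graph 4 path4_edges).
Proof.
move=> connG polyG.
have count_coef i : i <= #|vert G| -> Posz (indep_count G i) = (P2`_i)%R.
  by move=> le_i; rewrite -polyG coef_poly ltnS le_i.
have cardG : #|vert G| = 4.
  by have := count_coef 1 (proj1 connG); rewrite indep_count1 P2E coef_Poly => -[].
have [count2 count3] : indep_count G 2 = 3 /\ indep_count G 3 = 0.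
  by split; apply/eqP; rewrite -eqz_nat count_coef ?cardG // P2E coef_Poly.
have /card_gt0P [x0 _] : 0 < #|vert G| by rewrite cardG.
have isoHG := edge_graph_enum_adj_iso x0 cardG; set es := rel_edges _ 4 in isoHG.
have count_H k : edge_indep_count 4 es k = indep_count G k.
  by rewrite -edge_graph_indep_count (indep_count_iso _ isoHG).
have /implyP := path4_relabelling (size_map _ (lt_pairs 4)) (filter_mask _ _ : es = _).
rewrite !count_H count2 count3 edge_graph_no_isolated //; last first.
  exact: connected_iso (isomorphic_sym isoHG) connG.
case/(_ isT)/hasP => p; rewrite mem_permutations => perm_p relabel.
exact: isomorphic_trans (isomorphic_sym isoHG) (edge_graph_iso perm_p relabel).
Qed.

Lemma exactly_one_class_P2 : exactly_one_class P2.
Proof.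
split.
  exists (edge_graph 4 path4_edges); split; first exact: edge_graph_connected.
  by rewrite P2E; apply: edge_graph_indep_poly.
move=> G H connG polyG connH polyH.
exact: isomorphic_trans (connected_P2_iso_path4 connG polyG)
                        (isomorphic_sym (connected_P2_iso_path4 connH polyH)).
Qed.

Lemma exactly_one_class_at_least P : exactly_one_class P -> at_least_classes 1 P.
Proof. by case=> -[G GP] _; exists (fun=> G); split=> // -[[|?] ?] -[[|?] ?]. Qed.

Definition P1_graphs : seq (seq (nat * nat)) := [::
  [:: (0,1); (0,2); (0,3); (0,4); (0,5); (0,6); (0,7); (0,8); (0,9); (1,2); (1,3); (1,4); (1,5); (1,6); (1,7); (1,8); (1,9); (1,10); (2,3); (2,4); (2,5); (2,6); (2,7); (2,9); (2,10); (2,11); (3,7); (3,8); (3,9); (3,10); (3,11); (4,5); (4,6); (4,7); (4,8); (4,9); (4,10); (5,6); (5,7); (5,8); (5,9); (5,11); (6,7); (6,8); (6,9); (6,10); (6,11); (7,8); (7,9); (7,10); (7,11); (8,9); (8,10); (8,11); (9,10); (9,11); (10,11)];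
  [:: (0,1); (0,2); (0,3); (0,4); (0,5); (0,6); (0,7); (0,8); (0,9); (1,2); (1,3); (1,4); (1,5); (1,6); (1,7); (1,8); (1,9); (1,10); (1,11); (2,3); (2,4); (2,5); (2,7); (2,8); (2,10); (2,11); (3,4); (3,5); (3,6); (3,7); (3,8); (3,9); (3,10); (3,11); (4,5); (4,6); (4,7); (4,8); (4,9); (5,6); (5,7); (5,8); (5,9); (5,10); (6,7); (6,8); (6,9); (6,10); (6,11); (7,8); (7,10); (8,9); (8,10); (8,11); (9,10); (9,11); (10,11)];
  [:: (0,1); (0,2); (0,3); (0,4); (0,5); (0,6); (0,7); (0,8); (0,9); (0,10); (1,2); (1,4); (1,5); (1,6); (1,7); (1,9); (1,10); (1,11); (2,3); (2,4); (2,6); (2,7); (2,8); (2,9); (2,10); (2,11); (3,4); (3,5); (3,6); (3,7); (3,8); (3,9); (3,10); (3,11); (4,5); (4,6); (4,8); (4,9); (4,10); (4,11); (5,6); (5,8); (5,9); (5,10); (6,7); (6,9); (6,11); (7,8); (7,9); (7,10); (7,11); (8,9); (8,10); (8,11); (9,10); (9,11); (10,11)];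
  [:: (0,1); (0,2); (0,3); (0,4); (0,5); (0,6); (0,7); (0,8); (0,9); (0,10); (0,11); (1,2); (1,4); (1,5); (1,6); (1,7); (1,8); (1,9); (1,11); (2,3); (2,4); (2,5); (2,6); (2,7); (2,8); (2,9); (2,10); (2,11); (3,4); (3,5); (3,7); (3,8); (3,9); (3,10); (3,11); (4,5); (4,6); (4,7); (4,8); (4,10); (4,11); (5,6); (5,7); (5,8); (5,9); (5,10); (5,11); (6,7); (6,8); (6,11); (7,8); (7,9); (7,11); (8,9); (8,10); (8,11); (9,10)];
  [:: (0,1); (0,2); (0,3); (0,4); (0,5); (0,6); (0,7); (0,8); (0,9); (0,10); (1,2); (1,3); (1,4); (1,6); (1,7); (1,8); (1,9); (1,10); (1,11); (2,3); (2,4); (2,5); (2,6); (2,7); (2,8); (2,9); (2,10); (2,11); (3,4); (3,5); (3,6); (3,7); (3,8); (3,9); (3,10); (4,5); (4,6); (4,8); (4,9); (4,11); (5,6); (5,7); (5,8); (5,10); (5,11); (6,7); (6,8); (6,9); (6,10); (6,11); (7,8); (7,9); (7,10); (7,11); (8,10); (8,11); (9,10)];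
  [:: (0,1); (0,2); (0,3); (0,4); (0,5); (0,6); (0,7); (0,8); (0,9); (0,10); (0,11); (1,2); (1,3); (1,4); (1,5); (1,6); (1,7); (1,8); (1,9); (1,10); (1,11); (2,3); (2,6); (2,7); (2,8); (2,9); (2,10); (2,11); (3,4); (3,5); (3,6); (3,7); (3,8); (3,10); (3,11); (4,5); (4,6); (4,7); (4,8); (4,9); (5,6); (5,7); (5,8); (5,9); (5,11); (6,8); (6,10); (6,11); (7,9); (7,10); (7,11); (8,9); (8,10); (8,11); (9,10); (9,11); (10,11)];
  [:: (0,1); (0,2); (0,3); (0,4); (0,5); (0,6); (0,7); (0,8); (0,9); (1,3); (1,4); (1,5); (1,6); (1,7); (1,8); (1,9); (1,10); (1,11); (2,3); (2,4); (2,5); (2,6); (2,7); (2,8); (2,9); (2,10); (2,11); (3,4); (3,5); (3,7); (3,8); (3,9); (3,11); (4,5); (4,6); (4,7); (4,9); (4,10); (4,11); (5,6); (5,8); (5,10); (5,11); (6,7); (6,8); (6,9); (6,10); (6,11); (7,8); (7,9); (7,11); (8,9); (8,10); (8,11); (9,10); (9,11); (10,11)];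
  [:: (0,1); (0,2); (0,3); (0,4); (0,5); (0,6); (0,7); (0,8); (0,9); (0,10); (1,3); (1,4); (1,5); (1,6); (1,7); (1,8); (1,9); (1,10); (1,11); (2,3); (2,4); (2,6); (2,8); (2,9); (2,10); (3,4); (3,5); (3,6); (3,7); (3,8); (3,9); (3,10); (3,11); (4,5); (4,6); (4,7); (4,8); (5,6); (5,7); (5,8); (5,9); (5,10); (5,11); (6,7); (6,8); (6,9); (6,10); (6,11); (7,8); (7,9); (7,10); (7,11); (8,9); (8,11); (9,10); (9,11); (10,11)];
  [:: (0,1); (0,2); (0,3); (0,4); (0,5); (0,6); (0,7); (0,8); (0,9); (0,10); (0,11); (1,2); (1,3); (1,4); (1,5); (1,6); (1,7); (1,8); (1,9); (1,10); (1,11); (2,3); (2,5); (2,6); (2,9); (2,10); (2,11); (3,4); (3,7); (3,8); (3,9); (3,10); (3,11); (4,5); (4,6); (4,7); (4,8); (4,9); (4,10); (4,11); (5,6); (5,8); (5,9); (5,10); (5,11); (6,7); (6,9); (6,10); (6,11); (7,8); (7,9); (7,10); (7,11); (8,11); (9,10); (9,11); (10,11)];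
  [:: (0,1); (0,2); (0,3); (0,4); (0,5); (0,6); (0,7); (0,8); (0,9); (0,10); (1,3); (1,4); (1,5); (1,6); (1,7); (1,8); (1,9); (1,10); (1,11); (2,3); (2,4); (2,5); (2,6); (2,8); (2,9); (2,10); (2,11); (3,4); (3,6); (3,7); (3,8); (3,9); (3,11); (4,5); (4,6); (4,7); (4,8); (4,9); (4,11); (5,6); (5,7); (5,9); (5,10); (5,11); (6,7); (6,8); (6,9); (6,10); (6,11); (7,9); (7,11); (8,9); (8,10); (8,11); (9,10); (9,11); (10,11)]].

Definition P3_graphs : seq (seq (nat * nat)) := [::
  [:: (0,1); (0,2); (0,3); (0,4); (0,5); (0,6); (1,3); (1,4); (1,6); (1,7); (2,3); (2,4); (2,5); (3,6); (4,5); (4,6); (4,7); (5,6); (5,7); (6,7)];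
  [:: (0,1); (0,2); (0,3); (0,4); (0,5); (0,6); (1,2); (1,3); (1,4); (1,5); (1,6); (2,3); (2,4); (2,6); (3,4); (3,5); (3,7); (4,6); (5,7); (6,7)];
  [:: (0,1); (0,2); (0,3); (0,4); (0,5); (1,2); (1,3); (1,5); (1,6); (2,3); (2,5); (2,6); (2,7); (3,4); (3,5); (3,6); (3,7); (4,6); (4,7); (6,7)];
  [:: (0,1); (0,2); (0,3); (0,4); (0,5); (1,2); (1,5); (1,6); (1,7); (2,4); (2,5); (2,7); (3,4); (3,6); (4,5); (4,6); (4,7); (5,6); (5,7); (6,7)];
  [:: (0,1); (0,2); (0,3); (0,4); (0,5); (1,2); (1,3); (1,5); (1,6); (1,7); (2,3); (2,4); (2,5); (3,4); (3,6); (3,7); (4,7); (5,6); (5,7); (6,7)];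
  [:: (0,1); (0,2); (0,3); (0,4); (0,5); (0,6); (1,3); (1,4); (1,5); (1,6); (1,7); (2,5); (2,6); (2,7); (3,4); (3,5); (3,6); (3,7); (4,6); (5,7)];
  [:: (0,1); (0,2); (0,3); (0,4); (0,5); (1,2); (1,3); (1,5); (1,6); (2,3); (2,5); (2,6); (2,7); (3,4); (3,7); (4,6); (4,7); (5,6); (5,7); (6,7)];
  [:: (0,1); (0,2); (0,3); (0,4); (0,5); (0,6); (1,5); (1,6); (1,7); (2,3); (2,4); (2,6); (2,7); (3,4); (3,7); (4,6); (4,7); (5,6); (5,7); (6,7)];
  [:: (0,1); (0,2); (0,3); (0,4); (0,5); (1,3); (1,5); (1,6); (1,7); (2,4); (2,5); (2,6); (2,7); (3,4); (3,6); (4,5); (4,6); (4,7); (5,7); (6,7)];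
  [:: (0,1); (0,2); (0,3); (0,4); (0,5); (1,2); (1,4); (1,5); (1,6); (1,7); (2,4); (2,5); (2,7); (3,5); (3,6); (3,7); (4,6); (5,6); (5,7); (6,7)];
  [:: (0,1); (0,2); (0,3); (0,4); (0,5); (1,2); (1,3); (1,4); (1,5); (1,6); (1,7); (2,4); (2,5); (2,7); (3,5); (3,6); (3,7); (4,6); (4,7); (6,7)];
  [:: (0,1); (0,2); (0,3); (0,4); (0,5); (1,3); (1,5); (1,6); (2,3); (2,4); (2,5); (2,6); (2,7); (3,4); (3,7); (4,5); (4,6); (4,7); (5,6); (6,7)];
  [:: (0,1); (0,2); (0,3); (0,4); (0,5); (1,2); (1,3); (1,4); (1,6); (2,3); (2,5); (2,6); (3,4); (3,5); (3,7); (4,5); (4,6); (4,7); (5,7); (6,7)];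
  [:: (0,1); (0,2); (0,3); (0,4); (0,5); (0,6); (1,2); (1,3); (1,5); (1,7); (2,3); (2,4); (2,5); (2,7); (3,4); (3,5); (4,6); (4,7); (5,6); (6,7)];
  [:: (0,1); (0,2); (0,3); (0,4); (0,5); (0,6); (1,3); (1,4); (1,5); (1,6); (1,7); (2,4); (2,5); (2,6); (2,7); (3,5); (3,7); (4,6); (5,7); (6,7)];
  [:: (0,1); (0,2); (0,3); (0,4); (0,5); (1,3); (1,4); (1,5); (2,3); (2,4); (2,6); (2,7); (3,5); (3,6); (3,7); (4,5); (4,6); (4,7); (5,7); (6,7)];
  [:: (0,1); (0,2); (0,3); (0,4); (1,4); (1,5); (1,6); (2,3); (2,4); (2,5); (2,7); (3,4); (3,5); (3,6); (3,7); (4,5); (4,7); (5,6); (5,7); (6,7)];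
  [:: (0,1); (0,2); (0,3); (1,3); (1,4); (1,5); (1,6); (1,7); (2,3); (2,4); (2,6); (3,4); (3,5); (3,6); (4,5); (4,6); (4,7); (5,6); (5,7); (6,7)];
  [:: (0,1); (0,2); (0,3); (0,4); (0,5); (1,2); (1,3); (1,4); (1,5); (1,6); (2,3); (2,5); (2,6); (2,7); (3,4); (3,5); (3,7); (4,5); (4,6); (6,7)];
  [:: (0,1); (0,2); (0,3); (0,4); (0,5); (0,6); (1,2); (1,4); (1,6); (1,7); (2,3); (2,4); (2,6); (3,4); (3,5); (3,7); (4,6); (4,7); (5,7); (6,7)];
  [:: (0,1); (0,2); (0,3); (0,4); (1,2); (1,3); (1,4); (1,5); (1,6); (2,3); (2,4); (2,5); (3,6); (3,7); (4,5); (4,6); (4,7); (5,6); (5,7); (6,7)];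
  [:: (0,1); (0,2); (0,3); (0,4); (0,5); (1,2); (1,3); (1,5); (1,6); (2,3); (2,4); (2,5); (2,6); (2,7); (3,5); (3,6); (4,6); (4,7); (5,6); (6,7)];
  [:: (0,1); (0,2); (0,3); (0,4); (0,5); (1,3); (1,4); (1,5); (1,6); (1,7); (2,3); (2,5); (2,7); (3,5); (3,6); (3,7); (4,6); (5,6); (5,7); (6,7)];
  [:: (0,1); (0,2); (0,3); (0,4); (0,5); (1,2); (1,3); (1,4); (1,5); (1,6); (2,4); (2,5); (2,6); (3,4); (3,5); (3,6); (3,7); (4,6); (4,7); (6,7)];
  [:: (0,1); (0,2); (0,3); (0,4); (0,5); (0,6); (1,2); (1,3); (1,4); (1,5); (2,3); (2,4); (2,5); (2,7); (3,4); (3,5); (3,7); (4,5); (5,6); (6,7)]].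

Definition P4_graphs : seq (seq (nat * nat)) := [::
  [:: (0,1); (0,2); (0,3); (0,4); (0,5); (0,6); (0,7); (0,8); (0,9); (1,2); (1,3); (1,4); (1,8); (1,9); (1,10); (1,11); (2,8); (2,9); (2,11); (2,12); (2,13); (2,14); (3,4); (3,5); (3,6); (3,7); (3,11); (3,12); (3,13); (3,14); (4,5); (4,7); (4,8); (4,11); (4,12); (4,14); (5,8); (5,9); (5,10); (5,12); (5,13); (5,14); (6,7); (6,10); (6,12); (6,13); (7,11); (7,12); (7,13); (7,14); (8,9); (8,11); (8,14); (9,10); (9,12); (10,11); (10,14); (11,13); (11,14); (12,13)];
  [:: (0,1); (0,2); (0,3); (0,4); (0,5); (0,6); (0,7); (0,8); (0,9); (1,2); (1,3); (1,4); (1,5); (1,7); (1,10); (1,11); (1,12); (1,13); (2,6); (2,8); (2,9); (2,11); (2,12); (2,13); (2,14); (3,4); (3,5); (3,6); (3,7); (3,8); (3,11); (3,13); (4,5); (4,7); (4,10); (4,11); (4,12); (5,7); (5,10); (5,11); (5,13); (5,14); (6,9); (6,11); (6,12); (6,14); (7,9); (7,13); (7,14); (8,10); (8,11); (8,12); (8,13); (9,13); (9,14); (10,12); (10,14); (11,13); (11,14); (13,14)];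
  [:: (0,1); (0,2); (0,3); (0,4); (0,5); (0,6); (1,2); (1,3); (1,7); (1,8); (1,9); (1,10); (1,11); (2,4); (2,5); (2,9); (2,11); (2,12); (2,13); (2,14); (3,4); (3,6); (3,7); (3,8); (3,10); (3,11); (4,5); (4,7); (4,8); (4,9); (4,10); (4,12); (4,13); (5,6); (5,7); (5,8); (5,9); (5,12); (5,14); (6,7); (6,12); (6,13); (6,14); (7,8); (7,9); (7,11); (7,12); (7,13); (8,10); (8,11); (8,13); (9,10); (9,12); (9,14); (10,14); (11,12); (11,13); (11,14); (12,13); (12,14)];
  [:: (0,1); (0,2); (0,3); (0,4); (0,5); (0,6); (0,7); (0,8); (0,9); (1,2); (1,3); (1,7); (1,9); (1,10); (1,11); (1,12); (1,13); (2,4); (2,11); (2,13); (2,14); (3,5); (3,6); (3,9); (3,10); (3,12); (3,13); (4,5); (4,8); (4,10); (4,11); (4,12); (4,13); (5,6); (5,8); (5,10); (5,12); (6,8); (6,11); (6,12); (6,14); (7,8); (7,9); (7,10); (7,11); (7,12); (7,14); (8,9); (8,11); (9,10); (9,11); (9,12); (9,13); (9,14); (10,12); (10,13); (10,14); (11,13); (11,14); (12,13)]].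

Definition P5_graphs : seq (seq (nat * nat)) := [::
  [:: (0,1); (0,2); (0,3); (0,4); (0,5); (0,6); (0,7); (1,2); (1,3); (1,4); (1,5); (1,6); (1,7); (1,8); (1,9); (1,10); (1,11); (1,12); (2,3); (2,5); (2,6); (2,8); (2,9); (2,10); (2,11); (2,12); (3,4); (3,6); (3,7); (3,9); (3,10); (3,11); (4,5); (4,6); (4,7); (4,8); (4,10); (4,11); (4,12); (5,6); (5,7); (5,8); (5,9); (5,10); (6,7); (6,9); (6,10); (6,11); (6,12); (7,8); (7,9); (7,10); (8,9); (8,10); (8,11); (9,11); (10,12)];
  [:: (0,1); (0,2); (0,3); (0,4); (0,5); (0,6); (0,7); (1,3); (1,4); (1,5); (1,7); (1,8); (1,9); (1,10); (2,3); (2,4); (2,5); (2,7); (2,8); (2,9); (2,10); (2,11); (2,12); (3,4); (3,5); (3,6); (3,9); (3,10); (3,11); (3,12); (4,5); (4,6); (4,7); (4,8); (4,9); (4,10); (4,11); (4,12); (5,8); (5,9); (5,10); (5,11); (6,7); (6,8); (6,9); (6,11); (7,9); (7,10); (7,11); (7,12); (8,9); (8,10); (8,11); (8,12); (9,10); (9,11); (10,11)];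
  [:: (0,1); (0,2); (0,3); (0,4); (0,5); (0,6); (0,7); (0,8); (1,5); (1,6); (1,7); (1,8); (1,9); (1,10); (1,11); (2,3); (2,4); (2,5); (2,6); (2,7); (2,8); (2,9); (2,10); (2,11); (3,4); (3,5); (3,6); (3,7); (3,8); (3,9); (3,10); (3,11); (3,12); (4,5); (4,6); (4,7); (4,8); (4,10); (4,11); (5,6); (5,7); (5,8); (5,10); (5,11); (5,12); (6,8); (6,9); (6,11); (6,12); (7,9); (7,11); (7,12); (8,11); (9,11); (10,11); (10,12); (11,12)];
  [:: (0,1); (0,2); (0,3); (0,4); (0,5); (0,6); (0,7); (0,8); (0,9); (1,2); (1,3); (1,4); (1,5); (1,6); (1,8); (1,9); (1,10); (1,11); (2,3); (2,5); (2,6); (2,8); (2,10); (2,11); (3,4); (3,5); (3,6); (3,7); (3,8); (3,10); (3,11); (3,12); (4,6); (4,7); (4,8); (4,10); (4,11); (4,12); (5,6); (5,7); (5,8); (5,9); (5,10); (5,11); (5,12); (6,7); (6,8); (6,9); (6,10); (6,11); (7,8); (7,9); (8,9); (8,10); (9,10); (9,11); (10,12)];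
  [:: (0,1); (0,2); (0,3); (0,4); (0,5); (0,6); (0,7); (0,8); (1,2); (1,4); (1,5); (1,7); (1,8); (1,9); (1,10); (2,3); (2,4); (2,5); (2,6); (2,7); (2,8); (2,9); (2,10); (2,11); (2,12); (3,5); (3,6); (3,9); (3,10); (4,6); (4,7); (4,9); (4,10); (4,11); (5,6); (5,7); (5,8); (5,9); (5,10); (5,11); (5,12); (6,7); (6,8); (6,9); (6,10); (6,11); (6,12); (7,8); (7,9); (7,10); (7,12); (8,9); (8,12); (9,10); (9,11); (10,12); (11,12)]].

Theorem lemma4p2 :
  (forall P, P \in [:: P1; P2; P3; P4; P5] -> at_least_classes 1 P) /\
  at_least_classes 10 P1 /\
  exactly_one_class P2 /\
  at_least_classes 25 P3 /\
  at_least_classes 4 P4 /\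
  at_least_classes 5 P5.
Proof.
have P1_classes : at_least_classes 10 P1.
  rewrite P1E; apply: (at_least_classes_edge_graphs (n := 12) (graphs := P1_graphs));
    by vm_compute.
have P3_classes : at_least_classes 25 P3.
  rewrite P3E; apply: (at_least_classes_edge_graphs (n := 8) (graphs := P3_graphs));
    by vm_compute.
have P4_classes : at_least_classes 4 P4.
  rewrite P4E; apply: (at_least_classes_edge_graphs (n := 15) (graphs := P4_graphs));
    by vm_compute.
have P5_classes : at_least_classes 5 P5.
  rewrite P5E; apply: (at_least_classes_edge_graphs (n := 13) (graphs := P5_graphs));
    by vm_compute.
have P2_class := exactly_one_class_P2.
split; last first.
  exact: (conj P1_classes (conj P2_class (conj P3_classes (conj P4_classes P5_classes)))).
move=> P; rewrite !inE => /orP [/eqP-> | /orP [/eqP-> | /orP [/eqP-> | /orP [/eqP-> | /eqP->]]]].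
- exact: at_least_classes_leq P1_classes.
- exact: exactly_one_class_at_least.
- exact: at_least_classes_leq P3_classes.
- exact: at_least_classes_leq P4_classes.
- exact: at_least_classes_leq P5_classes.
Qed.
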